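(* Let $H$ and $K$ be finite groups that admit no common nonabelian simple quotient (i.e., there is no nonabelian simple group that is isomorphic to a quotient of $H$ and also to a quotient of $K$). Then $\mathrm{MaxDim}(H \times K) = \mathrm{MaxDim}(H) + \mathrm{MaxDim}(K)$.
   Context: All groups are finite. A finite set $\{H_1,\dots,H_n\}$ of subgroups of a group $G$ is in general position if for every $1 \le j \le n$, $\bigcap_{i \neq j} H_i \supsetneq \bigcap_{i} H_i$. $\mathrm{MaxDim}(G)$ is the largest cardinality of a collection of maximal subgroups of $G$ that is in general position. *)

From mathcomp Require Import all_boot all_fingroup all_solvable.
Set Implicit Arguments. Unset Strict Implicit. Unset Printing Implicit Defensive.
Local Open Scope group_scope.

(* Intersections are taken
   inside the ambient group G (so the empty intersection is G). *)
Definition gen_pos (gT : finGroupType) (G : {set gT}) (S : {set {group gT}}) : bool :=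
  [forall M in S,
     (G :&: \bigcap_(L in S) (L : {set gT}))
       \proper (G :&: \bigcap_(L in S :\ M) (L : {set gT}))].

Definition MaxDim (gT : finGroupType) (G : {set gT}) : nat :=
  \max_(S : {set {group gT}} |
          (S \subset [set M : {group gT} | maximal M G]) && gen_pos G S) #|S|.

Definition common_nonab_simple_quotient (gT1 gT2 : finGroupType)
    (H : {group gT1}) (K : {group gT2}) : Prop :=
  exists (N1 : {group gT1}) (N2 : {group gT2}),
    [/\ N1 <| H, N2 <| K, simple (H / N1), ~~ abelian (H / N1)
      & (H / N1) \isog (K / N2)].

From mathcomp Require Import all_boot all_fingroup all_solvable.
Set Implicit Arguments. Unset Strict Implicit. Unset Printing Implicit Defensive.
Local Open Scope group_scope.

(* Call a maximal subgroup of H x K standard if it is A x K or H x B with A, B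
   maximal.  A family of standard maximal subgroups is in general position iff
   the corresponding families in H and in K are; this gives
   MaxDim H + MaxDim K <= MaxDim (H x K) and the reverse bound for standard
   families.  By Goursat's lemma a non-standard maximal subgroup M contains
   N1 x N2 with H / N1 and K / N2 isomorphic simple groups; by hypothesis they
   are abelian, so N1 x K and H x N2 are normal maximal subgroups, and one of
   them, M', misses the witness g of M.  Then H x K = M' <g>, so replacing M by
   M' and correcting the other witnesses by powers of g (which lie in every
   other member) keeps general position; iterating makes the family standard
   without changing its size. *)

Lemma maximal_mulg_normal (gT : finGroupType) (G M X : {group gT}) :
  maximal M G -> X <| G -> ~~ (X \subset M) -> M * X = G.
Proof.
case/maxgroupP=> /proper_sub sMG maxM /andP[sXG nXG] nsXM.
apply/eqP; rewrite eqEproper mul_subG // -norm_joinEl ?(subset_trans sMG) //.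
by apply: contra nsXM => /maxM <-; rewrite ?joing_subl ?joing_subr.
Qed.

Lemma maximal_abelian_simple_quotient (gT : finGroupType) (G N : {group gT}) :
  N <| G -> simple (G / N) -> abelian (G / N) -> maximal N G.
Proof.
move=> nsNG; rewrite quotient_simple // => /maxgroupP[/andP[ltNG _] maxN] abGN.
apply/maxgroupP; split=> // X ltXG sNX; apply: maxN (sNX); rewrite ltXG /=.
apply: sub_der1_norm (proper_sub ltXG); apply: subset_trans sNX.
by rewrite der1_min ?normal_norm.
Qed.

Section GeneralPosition.
Variables (gT : finGroupType) (G : {group gT}).
Implicit Types (S : {set {group gT}}) (M : {group gT}).
Let maximals := [set M : {group gT} | maximal M G].

Lemma gen_posP S :
  reflect (forall M, M \in S ->
             exists2 g, g \in G :\: M & {in S :\ M, forall L : {group gT}, g \in L})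
          (gen_pos G S).
Proof.
apply: (iffP forall_inP) => sepS M MS.
  case/properP: (sepS M MS) => _ [g /setIP[gG /bigcapP gL] gNS].
  exists g => //; rewrite inE gG andbT; apply: contra gNS => gM.
  rewrite inE gG; apply/bigcapP => L LS.
  by case: (eqVneq L M) => [-> // | neLM]; apply: gL; rewrite !inE neLM.
case: (sepS M MS) => g /setDP[gG gNM] gL; apply/properP; split.
  by rewrite setIS //; apply/bigcapsP=> L /setD1P[_]; apply: bigcap_inf.
exists g; first by rewrite inE gG; apply/bigcapP.
by rewrite inE gG; apply: contra gNM => /bigcapP/(_ M MS).
Qed.

Lemma gen_pos_replace S M M' g :
    gen_pos G S -> M \in S -> g \in G :\: M ->
    {in S :\ M, forall L : {group gT}, g \in L} ->
    g \notin M' -> M' * <[g]> = G -> gen_pos G (M' |: (S :\ M)).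
Proof.
move=> /gen_posP sepS MS /setDP[gG gNM] gL gNM' defG; apply/gen_posP => L.
case/setU1P => [-> | LSM].
  exists g; first by rewrite inE gNM'.
  by move=> L' /setD1P[neL'M' /setU1P[eL' | /gL //]]; rewrite eL' eqxx in neL'M'.
have [x /setDP[xG xNL] xL] := sepS L (setD1P LSM).2.
have /mulsgP[m' _ m'M' /cycleP[i ->] defx] : x \in M' * <[g]> by rewrite defG.
have giL' L' : L' \in S :\ M -> g ^+ i \in L' by move/gL=> gL'; rewrite groupX.
have sM'G : M' \subset G by rewrite -defG mulg_subl ?group1.
exists m'.
  by rewrite inE (subsetP sM'G) // andbT -(groupMr m' (giL' L LSM)) -defx.
move=> L' /setD1P[neL'L /setU1P[-> // | L'SM]].
by rewrite -(groupMr m' (giL' L' L'SM)) -defx xL // !inE neL'L (setD1P L'SM).2.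
Qed.

Lemma leq_MaxDim S : S \subset maximals -> gen_pos G S -> #|S| <= MaxDim G.
Proof. by move=> sSmax gpS; apply: leq_bigmax_cond; rewrite sSmax. Qed.

Lemma MaxDim_attained :
  exists2 S : {set {group gT}}, (S \subset maximals) && gen_pos G S & MaxDim G = #|S|.
Proof.
have gp0 : (set0 \subset maximals) && gen_pos G set0.
  by rewrite sub0set; apply/forall_inP => M; rewrite inE.
exists [arg max_(S > set0 | (S \subset maximals) && gen_pos G S) #|S|].
  by case: arg_maxnP.
exact: bigmax_eq_arg.
Qed.

End GeneralPosition.

Section SetX.
Variables (gT1 gT2 : finGroupType) (H : {group gT1}) (K : {group gT2}).

Lemma pairM (a a' : gT1) (b b' : gT2) : (a, b) * (a', b') = (a * a', b * b').
Proof. by []. Qed.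

Lemma pairV (a : gT1) (b : gT2) : (a, b)^-1 = (a^-1, b^-1).
Proof. by []. Qed.

Lemma pairJ (a a' : gT1) (b b' : gT2) : (a, b) ^ (a', b') = (a ^ a', b ^ b').
Proof. by []. Qed.

Definition fstX := restrm_morphism (subsetT (setX H K)) (fst_morphism gT1 gT2).
Definition sndX := restrm_morphism (subsetT (setX H K)) (snd_morphism gT1 gT2).

Lemma morphpre_fstX (A : {set gT1}) : A \subset H -> fstX @*^-1 A = setX A K.
Proof.
move=> sAH; rewrite morphpre_restrm; apply/setP => -[a b]; rewrite !inE /=.
by rewrite andbAC (andb_idl (subsetP sAH a)).
Qed.

Lemma morphpre_sndX (B : {set gT2}) : B \subset K -> sndX @*^-1 B = setX H B.
Proof.
move=> sBK; rewrite morphpre_restrm; apply/setP => -[a b]; rewrite !inE /=.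
by rewrite -andbA (andb_idl (subsetP sBK b)).
Qed.

Lemma im_fstX : fstX @* setX H K = H.
Proof. by rewrite im_restrm morphim_fstX. Qed.

Lemma im_sndX : sndX @* setX H K = K.
Proof. by rewrite im_restrm morphim_sndX. Qed.

Lemma sub_im_fstX (A : {set gT1 * gT2}) : fstX @* A \subset H.
Proof.
by rewrite morphim_restrm (subset_trans (morphimS _ (subsetIl _ _))) ?morphim_fstX.
Qed.

Lemma sub_im_sndX (A : {set gT1 * gT2}) : sndX @* A \subset K.
Proof.
by rewrite morphim_restrm (subset_trans (morphimS _ (subsetIl _ _))) ?morphim_sndX.
Qed.

Lemma ker_sndX : 'ker sndX = setX H 1.
Proof. by rewrite kerE morphpre_sndX ?sub1G. Qed.

Lemma maximal_setXl (A : {group gT1}) :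
  A \subset H -> maximal (setX A K) (setX H K) = maximal A H.
Proof.
by move=> sAH; rewrite -[RHS](morphpre_maximal (f := fstX)) ?im_fstX // !morphpre_fstX.
Qed.

Lemma maximal_setXr (B : {group gT2}) :
  B \subset K -> maximal (setX H B) (setX H K) = maximal B K.
Proof.
by move=> sBK; rewrite -[RHS](morphpre_maximal (f := sndX)) ?im_sndX // !morphpre_sndX.
Qed.

Lemma setX_normal (N1 : {group gT1}) (N2 : {group gT2}) :
  N1 <| H -> N2 <| K -> setX N1 N2 <| setX H K.
Proof.
move=> nsN1H nsN2K; have [sN1H sN2K] := (normal_sub nsN1H, normal_sub nsN2K).
have -> : setX N1 N2 = setX N1 K :&: setX H N2.
  apply/setP => -[a b]; rewrite !inE /=.
  by rewrite andbACA (andb_idr (subsetP sN1H a)) (andb_idl (subsetP sN2K b)).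
apply: normalI.
  by move: nsN1H; rewrite -(morphpre_normal (f := fstX)) ?im_fstX // !morphpre_fstX.
by move: nsN2K; rewrite -(morphpre_normal (f := sndX)) ?im_sndX // !morphpre_sndX.
Qed.

End SetX.

Section MaximalSetX.
Variables (gT1 gT2 : finGroupType) (H : {group gT1}) (K : {group gT2}).

Definition standard_maximal (M : {set gT1 * gT2}) : bool :=
  [exists A : {group gT1}, maximal A H && (M == setX A K)] ||
  [exists B : {group gT2}, maximal B K && (M == setX H B)].

Section OneMaximal.
Variable M : {group gT1 * gT2}.
Hypothesis maxM : maximal M (setX H K).
Let sMG : M \subset setX H K := proper_sub (maxgroupp maxM).

Lemma standard_maximal_ker_fstX : 'ker (fstX H K) \subset M -> standard_maximal M.
Proof.
move=> sKM; have sM1H := sub_im_fstX H K M.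
have defM : M :=: setX (fstX H K @* M) K.
  by rewrite -(morphpre_fstX K sM1H) morphimGK.
apply/orP; left; apply/existsP; exists (fstX H K @* M)%G.
by rewrite -(maximal_setXl K sM1H) -defM maxM eqxx.
Qed.

Lemma standard_maximal_ker_sndX : 'ker (sndX H K) \subset M -> standard_maximal M.
Proof.
move=> sHM; have sM2K := sub_im_sndX H K M.
have defM : M :=: setX H (sndX H K @* M).
  by rewrite -(morphpre_sndX H sM2K) morphimGK.
apply/orP; right; apply/existsP; exists (sndX H K @* M)%G.
by rewrite -(maximal_setXr H sM2K) -defM maxM eqxx.
Qed.

Section Diagonal.
Hypotheses (nsKM : ~~ ('ker (fstX H K) \subset M))
           (nsHM : ~~ ('ker (sndX H K) \subset M)).

Let N1 := (pairg1 gT2 @*^-1 M)%G.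
Let N2 := (@pair1g gT1 gT2 @*^-1 M)%G.

Lemma im_fstX_maximal : fstX H K @* M = H.
Proof.
have := morphimMl (fstX H K) ('ker (fstX H K)) sMG.
by rewrite (maximal_mulg_normal maxM (ker_normal _) nsKM) im_fstX morphim_ker mulg1.
Qed.

Lemma im_sndX_maximal : sndX H K @* M = K.
Proof.
have := morphimMl (sndX H K) ('ker (sndX H K)) sMG.
by rewrite (maximal_mulg_normal maxM (ker_normal _) nsHM) im_sndX morphim_ker mulg1.
Qed.

Lemma normal_pairg1_pre : N1 <| H.
Proof.
apply/andP; split.
  by apply/subsetP => a; rewrite !inE => /(subsetP sMG); rewrite in_setX => /andP[].
apply/subsetP => h hH; rewrite inE; apply/subsetP => _ /imsetP[a aN1 ->].
have /morphimP[[h' k] _ hkM /= ->] : h \in fstX H K @* M by rewrite im_fstX_maximal.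
move: aN1; rewrite !inE /= => a1M.
by have := groupJ a1M hkM; rewrite pairJ conj1g.
Qed.

Lemma normal_pair1g_pre : N2 <| K.
Proof.
apply/andP; split.
  by apply/subsetP => b; rewrite !inE => /(subsetP sMG); rewrite in_setX => /andP[].
apply/subsetP => k kK; rewrite inE; apply/subsetP => _ /imsetP[b bN2 ->].
have /morphimP[[h k'] _ hkM /= ->] : k \in sndX H K @* M by rewrite im_sndX_maximal.
move: bN2; rewrite !inE /= => b1M.
by have := groupJ b1M hkM; rewrite pairJ conj1g.
Qed.

Lemma maxnormal_pairg1_pre : maxnormal N1 H H.
Proof.
have nsN1H := normal_pairg1_pre.
apply/maxgroupP; split.
  rewrite (normal_norm nsN1H) andbT properE (normal_sub nsN1H) /=.
  apply: contra nsHM => sHN1; rewrite ker_sndX; apply/subsetP => -[a b].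
  by rewrite in_setX => /andP[/(subsetP sHN1) + /set1P /= ->]; rewrite !inE.
move=> X /andP[ltXH nXH] sN1X; have nsXH : X <| H by rewrite /normal proper_sub.
have [sX1M | nsX1M] := boolP (setX X 1 \subset M).
  apply/eqP; rewrite eqEsubset sN1X andbT; apply/subsetP => x xX.
  by rewrite !inE (subsetP sX1M) // in_setX xX group1.
have defG := maximal_mulg_normal maxM (setX_normal nsXH (normal1 K)) nsX1M.
case/andP: ltXH => _ /subsetP[] h hH.
have : (h, 1) \in M * setX X 1 by rewrite defG in_setX hH group1.
case/mulsgP => m [x _] mM /[!in_setX] /andP[/= xX /set1P ->] defh1.
have : h * x^-1 \in N1.
  suff defm : pairg1 gT2 (h * x^-1) = m by rewrite !inE /= defm.
  by rewrite -(mulgK (x, 1) m) -defh1 pairV pairM invg1 mulg1.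
by move/(subsetP sN1X) => hxX; rewrite -(mulgKV x h) groupM.
Qed.

Lemma quotient_pre_pair_isog : H / N1 \isog K / N2.
Proof.
have [nsN1H nsN2K] := (normal_pairg1_pre, normal_pair1g_pre).
pose f1 := [morphism of coset N1 \o fstX H K].
pose f2 := [morphism of coset N2 \o sndX H K].
have dom1 : M \subset fstX H K @*^-1 'N(N1).
  by rewrite -sub_morphim_pre // im_fstX_maximal normal_norm.
have dom2 : M \subset sndX H K @*^-1 'N(N2).
  by rewrite -sub_morphim_pre // im_sndX_maximal normal_norm.
have im1 : f1 @* M = H / N1 by rewrite morphim_comp im_fstX_maximal.
have im2 : f2 @* M = K / N2 by rewrite morphim_comp im_sndX_maximal.
(* Both kernels are M :&: setX N1 N2: for (a, b) in M, (a, 1) \in M iff (1, b) \in M. *)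
have ker12 : 'ker_M f1 = 'ker_M f2.
  rewrite !ker_comp !ker_coset morphpre_fstX ?morphpre_sndX ?normal_sub //.
  apply/setP => -[a b]; rewrite !inE /=; case: (boolP ((a, b) \in M)) => //= abM.
  have /[!in_setX] /andP[/= aH bK] := subsetP sMG _ abM; rewrite aH bK andbT.
  have -> : pairg1 gT2 a = (a, b) * (pair1g gT1 b)^-1.
    by rewrite pairV pairM invg1 mulg1 mulgV.
  by rewrite groupMl // groupV.
rewrite -im1 -im2; apply: isog_trans (isog_symr (first_isog_loc f1 dom1)) _.
by rewrite ker12 first_isog_loc.
Qed.

Lemma setX_pre_pair_sub : setX N1 N2 \subset M.
Proof.
apply/subsetP => -[a b] /[!in_setX] /andP[/= /[!inE] a1M b1M].
by have := groupM a1M b1M; rewrite pairM mulg1 mul1g.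
Qed.

End Diagonal.

Lemma standard_or_diagonal_maximal :
  standard_maximal M \/
  exists (N1 : {group gT1}) (N2 : {group gT2}),
    [/\ N1 <| H, N2 <| K, simple (H / N1), H / N1 \isog K / N2
       & setX N1 N2 \subset M].
Proof.
have [sKM | nsKM] := boolP ('ker (fstX H K) \subset M).
  by left; apply: standard_maximal_ker_fstX.
have [sHM | nsHM] := boolP ('ker (sndX H K) \subset M).
  by left; apply: standard_maximal_ker_sndX.
right; exists (pairg1 gT2 @*^-1 M)%G, (@pair1g gT1 gT2 @*^-1 M)%G.
rewrite quotient_simple; last exact: normal_pairg1_pre.
split; [exact: normal_pairg1_pre | exact: normal_pair1g_pre
       | exact: maxnormal_pairg1_pre | exact: quotient_pre_pair_isog
       | exact: setX_pre_pair_sub].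
Qed.

End OneMaximal.

Hypothesis noHK : ~ common_nonab_simple_quotient H K.

Lemma nonstandard_maximal_setX (M : {group gT1 * gT2}) :
    maximal M (setX H K) -> ~~ standard_maximal M ->
  exists (N1 : {group gT1}) (N2 : {group gT2}),
    [/\ maximal N1 H, N1 <| H, maximal N2 K, N2 <| K & setX N1 N2 \subset M].
Proof.
move=> maxM; case: (standard_or_diagonal_maximal maxM) => [-> // | ].
case=> N1 [N2 [nsN1H nsN2K simHN1 isoHK sNM]] _.
have abHN1 : abelian (H / N1).
  by apply/idPn => nabHN1; apply: noHK; exists N1, N2.
have simKN2 : simple (K / N2) by rewrite -(isog_simple isoHK).
have abKN2 : abelian (K / N2) by rewrite -(isog_abelian isoHK).
by exists N1, N2; split; rewrite // maximal_abelian_simple_quotient.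
Qed.

End MaximalSetX.

Section SetXFamily.
Variables (gT1 gT2 : finGroupType) (H : {group gT1}) (K : {group gT2}).

Definition setX_family (T1 : {set {group gT1}}) (T2 : {set {group gT2}}) :
    {set {group gT1 * gT2}} :=
  [set setX_group A K | A in T1] :|: [set setX_group H B | B in T2].

Lemma setX_groupl_inj : injective (fun A : {group gT1} => setX_group A K).
Proof.
move=> A A' /(congr1 val) /= eAA'; apply/val_inj/setP => a.
by have /setP/(_ (a, 1)) := eAA'; rewrite !in_setX group1 !andbT.
Qed.

Lemma setX_groupr_inj : injective (fun B : {group gT2} => setX_group H B).
Proof.
move=> B B' /(congr1 val) /= eBB'; apply/val_inj/setP => b.
by have /setP/(_ (1, b)) := eBB'; rewrite !in_setX group1.
Qed.

Lemma card_setX_family (T1 : {set {group gT1}}) (T2 : {set {group gT2}}) :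
  {in T1, forall A : {group gT1}, A \proper H} ->
  #|setX_family T1 T2| = #|T1| + #|T2|.
Proof.
move=> ltT1H; have disjT12 : [disjoint [set setX_group A K | A in T1]
                                   & [set setX_group H B | B in T2]].
  apply/pred0P => L /=; apply/andP => -[/imsetP[A AT1 ->] /imsetP[B _]].
  have /properP[_ [a aH aNA]] := ltT1H A AT1.
  move/(congr1 (fun L : {group _} => (a, 1) \in L)); rewrite /= !in_setX.
  by rewrite aH (negbTE aNA) !group1.
rewrite cardsU (disjoint_setI0 disjT12) cards0 subn0.
by rewrite !card_imset //; [apply: setX_groupr_inj | apply: setX_groupl_inj].
Qed.

Lemma gen_pos_setX_family (T1 : {set {group gT1}}) (T2 : {set {group gT2}}) :
  gen_pos (setX H K) (setX_family T1 T2) = gen_pos H T1 && gen_pos K T2.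
Proof.
have famA A : A \in T1 -> setX_group A K \in setX_family T1 T2.
  by move=> AT1; rewrite inE (imset_f (fun A0 : {group gT1} => setX_group A0 K)).
have famB B : B \in T2 -> setX_group H B \in setX_family T1 T2.
  by move=> BT2; rewrite inE (imset_f (fun B0 : {group gT2} => setX_group H B0)) ?orbT.
apply/gen_posP/andP => [sepS | [/gen_posP sep1 /gen_posP sep2]].
  split; apply/gen_posP.
    move=> A AT1; have [[a b]] := sepS _ (famA A AT1).
    rewrite !inE /= => /andP[abNAK /andP[aH bK]] abL.
    exists a; first by rewrite inE aH andbT; apply: contra abNAK => ->.
    move=> A' /setD1P[neA'A A'T1].
    suff : (a, b) \in setX_group A' K by rewrite /= in_setX => /andP[].
    by apply: abL; rewrite in_setD1 (inj_eq setX_groupl_inj) neA'A famA.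
  move=> B BT2; have [[a b]] := sepS _ (famB B BT2).
  rewrite !inE /= => /andP[abNHB /andP[aH bK]] abL.
  exists b; first by rewrite inE bK andbT; apply: contra abNHB => ->; rewrite aH.
  move=> B' /setD1P[neB'B B'T2].
  suff : (a, b) \in setX_group H B' by rewrite /= in_setX => /andP[].
  by apply: abL; rewrite in_setD1 (inj_eq setX_groupr_inj) neB'B famB.
move=> M /setUP[] /imsetP[C CT ->].
  have [a /setDP[aH aNC] aL] := sep1 C CT.
  exists (a, 1); first by rewrite !inE /= aH (negbTE aNC) group1.
  move=> L /setD1P[neLM /setUP[] /imsetP[C' C'T defL]].
    rewrite defL (inj_eq setX_groupl_inj) in neLM.
    by rewrite defL !inE /= group1 andbT aL // in_setD1 neLM.
  by rewrite defL !inE /= aH group1.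
have [b /setDP[bK bNC] bL] := sep2 C CT.
exists (1, b); first by rewrite !inE /= bK (negbTE bNC) group1 andbF.
move=> L /setD1P[neLM /setUP[] /imsetP[C' C'T defL]].
  by rewrite defL !inE /= bK group1.
rewrite defL (inj_eq setX_groupr_inj) in neLM.
by rewrite defL !inE /= group1 bL // in_setD1 neLM.
Qed.

End SetXFamily.

Section MaxDimSetX.
Variables (gT1 gT2 : finGroupType) (H : {group gT1}) (K : {group gT2}).

Lemma MaxDim_setX_ge : MaxDim H + MaxDim K <= MaxDim (setX H K).
Proof.
have [T1 /andP[maxT1 gpT1] ->] := MaxDim_attained H.
have [T2 /andP[maxT2 gpT2] ->] := MaxDim_attained K.
have maxA A : A \in T1 -> maximal A H by move/(subsetP maxT1); rewrite inE.
have maxB B : B \in T2 -> maximal B K by move/(subsetP maxT2); rewrite inE.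
rewrite -(@card_setX_family _ _ H K T1 T2) => [|A /maxA/maxgroupp //].
apply: leq_MaxDim; last by rewrite gen_pos_setX_family gpT1.
apply/subsetP => M; rewrite !inE => /orP[] /imsetP[C CT ->].
  by have maxC := maxA C CT; rewrite maximal_setXl ?(proper_sub (maxgroupp maxC)).
by have maxC := maxB C CT; rewrite maximal_setXr ?(proper_sub (maxgroupp maxC)).
Qed.

Lemma standard_gen_pos_card_le (S : {set {group gT1 * gT2}}) :
    {in S, forall M : {group _}, standard_maximal H K M} -> gen_pos (setX H K) S ->
  #|S| <= MaxDim H + MaxDim K.
Proof.
move=> stdS gpS.
pose T1 := [set A : {group gT1} | maximal A H && (setX_group A K \in S)].
pose T2 := [set B : {group gT2} | maximal B K && (setX_group H B \in S)].
have defS : S = setX_family H K T1 T2.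
  apply/eqP; rewrite eqEsubset; apply/andP; split; apply/subsetP => M; last first.
    by rewrite !inE => /orP[] /imsetP[C /[!inE] /andP[_ ?] ->].
  move=> MS; rewrite inE; case/orP: (stdS M MS) => /existsP[C /andP[maxC /eqP defM]].
    have defMC : M = setX_group C K by apply: val_inj.
    rewrite defMC (imset_f (fun A : {group gT1} => setX_group A K)) //.
    by rewrite inE maxC -defMC.
  have defMC : M = setX_group H C by apply: val_inj.
  rewrite defMC (imset_f (fun B : {group gT2} => setX_group H B)) ?orbT //.
  by rewrite inE maxC -defMC.
move: gpS; rewrite defS gen_pos_setX_family => /andP[gp1 gp2].
rewrite card_setX_family => [|A]; last by rewrite inE => /andP[/maxgroupp].
by apply: leq_add; apply: leq_MaxDim => //; apply/subsetP => C; rewrite !inE => /andP[].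
Qed.

Hypothesis noHK : ~ common_nonab_simple_quotient H K.

Lemma normal_standard_maximal_avoid (M : {group gT1 * gT2}) g :
    maximal M (setX H K) -> ~~ standard_maximal H K M -> g \notin M ->
  exists M' : {group gT1 * gT2}, [/\ standard_maximal H K M',
    maximal M' (setX H K), M' <| setX H K & g \notin M'].
Proof.
move=> maxM nstdM; case: g => a b abNM.
have [N1 [N2 [maxN1 nsN1H maxN2 nsN2K sNM]]] := nonstandard_maximal_setX noHK maxM nstdM.
have [aN1 | aNN1] := boolP (a \in N1).
  have bNN2 : b \notin N2.
    by apply: contra abNM => bN2; apply: (subsetP sNM); rewrite in_setX aN1.
  exists (setX_group H N2); split; rewrite ?maximal_setXr ?normal_sub //.
  - by apply/orP; right; apply/existsP; exists N2; rewrite maxN2 eqxx.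
  - exact: setX_normal (normal_refl H) nsN2K.
  - by rewrite in_setX (negbTE bNN2) andbF.
exists (setX_group N1 K); split; rewrite ?maximal_setXl ?normal_sub //.
- by apply/orP; left; apply/existsP; exists N1; rewrite maxN1 eqxx.
- exact: setX_normal nsN1H (normal_refl K).
- by rewrite in_setX (negbTE aNN1).
Qed.

Lemma gen_pos_maximal_setX_card_le (S : {set {group gT1 * gT2}}) :
    S \subset [set M : {group _} | maximal M (setX H K)] ->
    gen_pos (setX H K) S ->
  #|S| <= MaxDim H + MaxDim K.
Proof.
have [n] := ubnP #|[set M in S | ~~ standard_maximal H K M]|.
elim: n S => // n IHn S ltNn maxS gpS.
have [M /andP[MS nstdM] | stdS] := pickP [pred M in S | ~~ standard_maximal H K M];
  last first.
  apply: standard_gen_pos_card_le => // M MS.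
  by have /= := stdS M; rewrite MS => /negbFE.
have maxM : maximal M (setX H K) by move/(subsetP maxS): MS; rewrite inE.
have [g gGM gL] := gen_posP _ _ gpS M MS.
have [M' [stdM' maxM' nsM'G gNM']] := normal_standard_maximal_avoid maxM nstdM (setDP gGM).2.
have defG : M' * <[g]> = setX H K.
  by apply: mulg_normal_maximal; rewrite ?cycle_subG ?(setDP gGM).1.
have M'NSM : M' \notin S :\ M by apply: contra gNM' => /gL.
have <- : #|M' |: (S :\ M)| = #|S| by rewrite cardsU1 M'NSM (cardsD1 M S) MS.
apply: IHn (gen_pos_replace gpS MS gGM gL gNM' defG).
  rewrite (cardsD1 M) inE MS nstdM add1n ltnS in ltNn.
  apply: leq_trans ltNn; apply/subset_leq_card/subsetP => L.
  rewrite !inE => /andP[/orP[/eqP-> | /andP[neLM LS]] nstdL].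
    by rewrite stdM' in nstdL.
  by rewrite neLM LS.
apply/subsetP => L; rewrite !inE => /orP[/eqP-> // | /andP[_ LS]].
by have := subsetP maxS L LS; rewrite inE.
Qed.

End MaxDimSetX.

Theorem theorem2p3 (gT1 gT2 : finGroupType) (H : {group gT1}) (K : {group gT2}) :
  ~ common_nonab_simple_quotient H K ->
  MaxDim (setX H K) = MaxDim H + MaxDim K.
Proof.
move=> noHK; apply/eqP; rewrite eqn_leq MaxDim_setX_ge andbT.
by apply/bigmax_leqP => S /andP[maxS gpS]; apply: gen_pos_maximal_setX_card_le.
Qed.
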